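(* Let $G=H\times K$ where $H$ and $K$ are finitely generated groups. Then $\alpha_G\preccurlyeq\alpha_H\cdot\alpha_K$. If, in addition, $H$ and $K$ are characteristic in $G$, then $\alpha_G\sim\alpha_H\cdot\alpha_K$.
   Context: For a finitely generated group $G$ with finite generating set $\Sigma$, the automorphic growth function sends $n$ to the number of $\operatorname{Aut}(G)$-orbits of $G$ containing an element of word length at most $n$; $\alpha_G$ denotes its $\sim$-class (independent of $\Sigma$). For non-decreasing non-zero $f,g\colon\mathbb{N}\to\mathbb{N}$, $f\preccurlyeq g$ means there is $\lambda\in\mathbb{N}\setminus\{0\}$ with $f(n)\le\lambda g(\lambda n+\lambda)+\lambda$ for all $n$, and $f\sim g$ means both directions hold; products of classes are taken pointwise on representatives (well defined). *)

From Stdlib Require Import List Arith Lia.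
Import ListNotations.

Record Grp := {
  gcar :> Type;
  gmul : gcar -> gcar -> gcar;
  gone : gcar;
  ginv : gcar -> gcar;
  gassoc : forall x y z, gmul x (gmul y z) = gmul (gmul x y) z;
  gone_l : forall x, gmul gone x = x;
  ginv_l : forall x, gmul (ginv x) x = gone
}.

Arguments gmul {g} _ _.
Arguments gone {g}.
Arguments ginv {g} _.

Definition prodGrp (H K : Grp) : Grp.
Proof.
  refine {| gcar := (gcar H * gcar K)%type;
            gmul := fun a b => (gmul (fst a) (fst b), gmul (snd a) (snd b));
            gone := (@gone H, @gone K);
            ginv := fun a => (ginv (fst a), ginv (snd a)) |}.
  - intros [a1 a2] [b1 b2] [c1 c2]; simpl; now rewrite !gassoc.
  - intros [a1 a2]; simpl; now rewrite !gone_l.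
  - intros [a1 a2]; simpl; now rewrite !ginv_l.
Defined.

(* Evaluation of a word over Sigma^{+-1}: (true, s) stands for s, (false, s) for s^-1. *)
Definition eval_word {G : Grp} (w : list (bool * G)) : G :=
  fold_right (fun (p : bool * G) (acc : G) => gmul (if fst p then snd p else ginv (snd p)) acc) (@gone G) w.

Definition in_ball (G : Grp) (S : list G) (n : nat) (g : G) : Prop :=
  exists w : list (bool * G),
    length w <= n /\ (forall p, In p w -> In (snd p) S) /\ eval_word w = g.

Definition generates (G : Grp) (S : list G) : Prop :=
  forall g : G, exists n, in_ball G S n g.

Definition is_hom (G : Grp) (f : G -> G) : Prop :=
  forall x y : G, f (gmul x y) = gmul (f x) (f y).

Definition is_aut (G : Grp) (f : G -> G) : Prop :=
  is_hom G f /\ exists g : G -> G, (forall x, g (f x) = x) /\ (forall y, f (g y) = y).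

Definition same_orbit (G : Grp) (x y : G) : Prop :=
  exists f, is_aut G f /\ f x = y.

(* k is the number of Aut(G)-orbits of G containing an element of word
   length at most n (w.r.t. S): witnessed by k elements of the ball lying in
   pairwise distinct orbits, whose orbits cover the ball. *)
Definition aut_growth_at (G : Grp) (S : list G) (n k : nat) : Prop :=
  exists l : list G,
    length l = k /\
    (forall x, In x l -> in_ball G S n x) /\
    (forall i j, i < k -> j < k -> i <> j ->
       forall d : G, ~ same_orbit G (nth i l d) (nth j l d)) /\
    (forall g, in_ball G S n g -> exists x, In x l /\ same_orbit G g x).

Definition gpreceq (f g : nat -> nat) : Prop :=
  exists lam : nat, 0 < lam /\ forall n, f n <= lam * g (lam * n + lam) + lam.

Definition gsim (f g : nat -> nat) : Prop := gpreceq f g /\ gpreceq g f.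

Definition characteristic (G : Grp) (P : G -> Prop) : Prop :=
  forall phi, is_aut G phi ->
    (forall x, P x -> P (phi x)) /\ (forall y, P y -> exists x, P x /\ phi x = y).

Definition firstFactor (H K : Grp) : prodGrp H K -> Prop := fun g => snd g = gone.
Definition secondFactor (H K : Grp) : prodGrp H K -> Prop := fun g => fst g = gone.

(** Every automorphism of [H] and of [K] acts componentwise on [H x K], so the
    orbit of [(h, k)] contains the product of the orbits of [h] and [k]; the
    projections and the factor inclusions are homomorphisms, hence change word
    length by at most a constant factor.  So each orbit meeting the ball of
    radius [n] in [H x K] maps injectively to a pair of orbits meeting balls of
    radius [C n] in [H] and [K].  When both factors are characteristic, every
    automorphism of [H x K] is itself componentwise, orbits of [H x K] are
    exactly products of orbits, and the counting runs backwards. *)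

From Stdlib Require Import List Arith Lia.
Import ListNotations.

Arguments gassoc {g}.
Arguments gone_l {g}.
Arguments ginv_l {g}.

Lemma bounded_choice (P : nat -> nat -> Prop) k :
  (forall i, i < k -> exists j, P i j) -> exists F, forall i, i < k -> P i (F i).
Proof.
  induction k as [|k IH]; intros HP.
  - exists (fun _ => 0); intros; lia.
  - destruct IH as [F HF]; [intros; apply HP; lia|].
    destruct (HP k) as [j Hj]; [lia|].
    exists (fun i => if Nat.eq_dec i k then j else F i); intros i Hi.
    destruct (Nat.eq_dec i k); [subst; exact Hj | apply HF; lia].
Qed.

Lemma injective_bounded_le k m (F : nat -> nat) :
  (forall i, i < k -> F i < m) ->
  (forall i j, i < k -> j < k -> F i = F j -> i = j) -> k <= m.
Proof.
  intros Fm Finj.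
  assert (Hle : length (map F (seq 0 k)) <= length (seq 0 m)).
  { apply NoDup_incl_length.
    - apply NoDup_map_NoDup_ForallPairs; [|apply seq_NoDup].
      intros a b Ha Hb; apply in_seq in Ha, Hb; apply Finj; lia.
    - intros y Hy; apply in_map_iff in Hy; destruct Hy as [i [<- Hi]].
      apply in_seq in Hi; apply in_seq; specialize (Fm i); lia. }
  now rewrite length_map, !length_seq in Hle.
Qed.

Lemma list_uniform_bound {A} (L : list A) (P : nat -> A -> Prop) :
  (forall n m a, P n a -> n <= m -> P m a) ->
  (forall a, In a L -> exists n, P n a) -> exists C, forall a, In a L -> P C a.
Proof.
  intros Pmono; induction L as [|x L IH]; intros HL.
  - exists 0; intros a [].
  - destruct IH as [C HC]; [intros; apply HL; simpl; auto|].
    destruct (HL x) as [n Hn]; [simpl; auto|].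
    exists (Nat.max C n); intros a [<-|Ha]; eapply Pmono; eauto; lia.
Qed.

Lemma nth_list_prod {A B} (l1 : list A) (l2 : list B) a b (d : A * B) :
  a < length l1 -> b < length l2 ->
  nth (a * length l2 + b) (list_prod l1 l2) d = (nth a l1 (fst d), nth b l2 (snd d)).
Proof.
  revert a; induction l1 as [|x l1 IH]; intros a Ha Hb; simpl in Ha; [lia|].
  simpl; destruct a as [|a].
  - rewrite app_nth1 by (rewrite length_map; lia).
    rewrite nth_indep with (d' := (x, snd d)) by (rewrite length_map; lia).
    exact (map_nth (pair x) l2 (snd d) b).
  - rewrite app_nth2 by (rewrite length_map; lia).
    rewrite length_map.
    replace (S a * length l2 + b - length l2) with (a * length l2 + b) by lia.
    apply IH; lia.
Qed.

(** [aut_growth_at G S n k] is definitionally [class_count (in_ball G S n) (same_orbit G) k]. *)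
Definition class_count {A} (P : A -> Prop) (R : A -> A -> Prop) (k : nat) : Prop :=
  exists l : list A,
    length l = k /\
    (forall x, In x l -> P x) /\
    (forall i j, i < k -> j < k -> i <> j -> forall d : A, ~ R (nth i l d) (nth j l d)) /\
    (forall g, P g -> exists x, In x l /\ R g x).

Lemma class_count_le {A} (P Q : A -> Prop) (R E : A -> A -> Prop) k k' :
  class_count P R k -> class_count Q E k' ->
  (forall x y, E x y -> E y x) -> (forall x y z, E x y -> E y z -> E x z) ->
  (forall x, P x -> Q x) -> (forall x y, E x y -> R x y) -> k <= k'.
Proof.
  intros [l [Hl [lP [lR _]]]] [l' [Hl' [_ [_ l'E]]]] Esym Etrans PQ ER.
  destruct k as [|k]; [lia|].
  assert (d : A) by (destruct l; [discriminate | exact a]).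
  destruct (bounded_choice
              (fun i j => j < k' /\ E (nth i l d) (nth j l' d)) (S k)) as [F HF].
  { intros i Hi.
    assert (Hx : In (nth i l d) l) by (apply nth_In; lia).
    destruct (l'E _ (PQ _ (lP _ Hx))) as [y [Hy Ey]].
    destruct (In_nth _ _ d Hy) as [j [Hj <-]].
    exists j; split; [lia | exact Ey]. }
  apply (injective_bounded_le (S k) k' F); [apply HF|].
  intros i i' Hi Hi' Heq.
  destruct (HF i Hi) as [_ Ei], (HF i' Hi') as [_ Ei']; rewrite <- Heq in Ei'.
  destruct (Nat.eq_dec i i') as [|Hne]; [assumption|].
  exfalso; apply (lR i i' Hi Hi' Hne d), ER.
  exact (Etrans _ _ _ Ei (Esym _ _ Ei')).
Qed.

Lemma class_count_prod {A B} (P1 : A -> Prop) (P2 : B -> Prop)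
    (R1 : A -> A -> Prop) (R2 : B -> B -> Prop) k1 k2 :
  class_count P1 R1 k1 -> class_count P2 R2 k2 ->
  class_count (fun x => P1 (fst x) /\ P2 (snd x))
              (fun x y => R1 (fst x) (fst y) /\ R2 (snd x) (snd y)) (k1 * k2).
Proof.
  intros [l1 [L1 [P1l [R1l C1]]]] [l2 [L2 [P2l [R2l C2]]]].
  exists (list_prod l1 l2); split; [|split; [|split]].
  - now rewrite length_prod, L1, L2.
  - intros [a b] Hab; apply in_prod_iff in Hab; split; [apply P1l | apply P2l]; apply Hab.
  - assert (Hdiv : forall i, i < k1 * k2 ->
              i = i / k2 * length l2 + i mod k2 /\ i / k2 < k1 /\ i mod k2 < k2).
    { intros i Hi; rewrite L2.
      assert (k2 <> 0) by (intros ->; lia).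
      split; [rewrite (Nat.div_mod_eq i k2) at 1; lia|].
      split; [apply Nat.Div0.div_lt_upper_bound; lia | now apply Nat.mod_upper_bound]. }
    intros i j Hi Hj Hne d [R1ij R2ij].
    destruct (Hdiv i Hi) as [Ei [Ai Bi]], (Hdiv j Hj) as [Ej [Aj Bj]].
    rewrite Ei, nth_list_prod in R1ij, R2ij by lia.
    rewrite Ej, nth_list_prod in R1ij, R2ij by lia.
    destruct (Nat.eq_dec (i / k2) (j / k2)) as [Ea|Na];
      [destruct (Nat.eq_dec (i mod k2) (j mod k2)) as [Eb|Nb]|].
    + apply Hne; rewrite Ei, Ej, Ea, Eb; reflexivity.
    + exact (R2l _ _ Bi Bj Nb _ R2ij).
    + exact (R1l _ _ Ai Aj Na _ R1ij).
  - intros [a b] [Pa Pb].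
    destruct (C1 a Pa) as [x [Hx Rx]], (C2 b Pb) as [y [Hy Ry]].
    exists (x, y); split; [apply in_prod|]; auto.
Qed.

Lemma gpreceq_of_linear_bound (f g : nat -> nat) :
  (exists C, forall n m, C * n <= m -> f n <= g m) -> gpreceq f g.
Proof.
  intros [C HC]; exists (S C); split; [lia|]; intros n.
  specialize (HC n (S C * n + S C)); nia.
Qed.

Section GroupFacts.
Variable G : Grp.

Lemma gmulV (x : G) : gmul x (ginv x) = gone.
Proof.
  rewrite <- (gone_l (gmul x (ginv x))), <- (ginv_l (ginv x)) at 1.
  rewrite <- gassoc, (gassoc (ginv x) x (ginv x)), ginv_l, gone_l.
  apply ginv_l.
Qed.

Lemma gmul1 (x : G) : gmul x gone = x.
Proof. rewrite <- (ginv_l x), gassoc, gmulV; apply gone_l. Qed.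

Lemma ginv_unique (a b : G) : gmul a b = gone -> a = ginv b.
Proof. intros Hab; rewrite <- (gmul1 a), <- (gmulV b), gassoc, Hab; apply gone_l. Qed.

Lemma left_unit_unique (a b : G) : gmul a b = b -> a = gone.
Proof. intros Hab; rewrite <- (gmul1 a), <- (gmulV b), gassoc, Hab; reflexivity. Qed.

Lemma ginvM (x y : G) : ginv (gmul x y) = gmul (ginv y) (ginv x).
Proof.
  symmetry; apply ginv_unique.
  rewrite <- gassoc, (gassoc (ginv x) x y), ginv_l, gone_l; apply ginv_l.
Qed.

Lemma ginvK (x : G) : ginv (ginv x) = x.
Proof. symmetry; apply ginv_unique, gmulV. Qed.

Lemma ginv1 : ginv (@gone G) = gone.
Proof. symmetry; apply ginv_unique, gone_l. Qed.

Lemma eval_word_app (w1 w2 : list (bool * G)) :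
  eval_word (w1 ++ w2) = gmul (eval_word w1) (eval_word w2).
Proof.
  induction w1 as [|p w IH]; simpl; [now rewrite gone_l | now rewrite IH, gassoc].
Qed.

Definition inv_letter (p : bool * G) : bool * G := (negb (fst p), snd p).

Lemma eval_word_inv (w : list (bool * G)) :
  eval_word (rev (map inv_letter w)) = ginv (eval_word w).
Proof.
  induction w as [|[[|] s] w IH]; simpl.
  - now rewrite ginv1.
  - rewrite eval_word_app, IH, ginvM; simpl; now rewrite gmul1.
  - rewrite eval_word_app, IH, ginvM; simpl; now rewrite gmul1, ginvK.
Qed.

Variable S : list G.

Lemma in_ball_mono n m (g : G) : in_ball G S n g -> n <= m -> in_ball G S m g.
Proof. intros [w [Hw [HS Hg]]] Hnm; exists w; repeat split; auto; lia. Qed.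

Lemma in_ball1 : in_ball G S 0 gone.
Proof. exists []; split; [|split]; [auto | intros p [] | reflexivity]. Qed.

Lemma in_ballM a b (x y : G) :
  in_ball G S a x -> in_ball G S b y -> in_ball G S (a + b) (gmul x y).
Proof.
  intros [w [Hw [wS <-]]] [v [Hv [vS <-]]]; exists (w ++ v); repeat split.
  - rewrite length_app; lia.
  - intros p Hp; apply in_app_or in Hp; destruct Hp; auto.
  - apply eval_word_app.
Qed.

Lemma in_ballV a (x : G) : in_ball G S a x -> in_ball G S a (ginv x).
Proof.
  intros [w [Hw [wS <-]]]; exists (rev (map inv_letter w)); repeat split.
  - rewrite length_rev, length_map; lia.
  - intros p Hp; apply in_rev, in_map_iff in Hp.
    destruct Hp as [q [<- Hq]]; exact (wS q Hq).
  - apply eval_word_inv.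
Qed.

Lemma same_orbit_sym (x y : G) : same_orbit G x y -> same_orbit G y x.
Proof.
  intros [f [[fM [g [gf fg]]] <-]]; exists g; split; [|apply gf].
  split; [|exists f; auto].
  intros a b; rewrite <- (fg a), <- (fg b) at 1; rewrite <- fM; apply gf.
Qed.

Lemma same_orbit_trans (x y z : G) :
  same_orbit G x y -> same_orbit G y z -> same_orbit G x z.
Proof.
  intros [f [[fM [f' [f'f ff']]] <-]] [g [[gM [g' [g'g gg']]] <-]].
  exists (fun a => g (f a)); split; [|reflexivity].
  split; [intros a b; now rewrite fM, gM|].
  exists (fun a => f' (g' a)); split; intros a; [now rewrite g'g, f'f | now rewrite ff', gg'].
Qed.

End GroupFacts.

Definition grp_morph (G1 G2 : Grp) (f : G1 -> G2) : Prop :=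
  forall x y, f (gmul x y) = gmul (f x) (f y).

Section Morphism.
Variables (G1 G2 : Grp) (f : G1 -> G2).
Hypothesis fM : grp_morph G1 G2 f.

Lemma morph1 : f gone = gone.
Proof. apply (left_unit_unique _ _ (f gone)); rewrite <- fM, gone_l; reflexivity. Qed.

Lemma morphV x : f (ginv x) = ginv (f x).
Proof. apply ginv_unique; rewrite <- fM, ginv_l; apply morph1. Qed.

Variables (S1 : list G1) (S2 : list G2).

Lemma morph_in_ball C :
  (forall s, In s S1 -> in_ball G2 S2 C (f s)) ->
  forall n g, in_ball G1 S1 n g -> in_ball G2 S2 (C * n) (f g).
Proof.
  intros fS n g [w [Hw [wS <-]]].
  apply in_ball_mono with (C * length w); [|nia].
  clear Hw; induction w as [|[[|] s] w IH]; simpl.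
  - rewrite morph1, Nat.mul_0_r; apply in_ball1.
  - rewrite fM, Nat.mul_succ_r, Nat.add_comm.
    apply in_ballM; [apply fS, (wS (true, s)) | apply IH; intros; apply wS]; simpl; auto.
  - rewrite fM, morphV, Nat.mul_succ_r, Nat.add_comm.
    apply in_ballM; [apply in_ballV, fS, (wS (false, s)) | apply IH; intros; apply wS];
      simpl; auto.
Qed.

Lemma morph_lipschitz :
  generates G2 S2 -> exists C, forall n g, in_ball G1 S1 n g -> in_ball G2 S2 (C * n) (f g).
Proof.
  intros gen2.
  destruct (list_uniform_bound S1 (fun n s => in_ball G2 S2 n (f s))) as [C HC].
  - intros n m a Ha Hnm; eapply in_ball_mono; eauto.
  - intros s _; apply gen2.
  - exists C; apply morph_in_ball, HC.
Qed.

End Morphism.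

(** [i] and [r] play the roles of the inclusion of a factor and the projection onto it. *)
Lemma retract_aut (G A : Grp) (P : G -> Prop) (i : A -> G) (r : G -> A) (phi : G -> G) :
  grp_morph A G i -> grp_morph G A r ->
  (forall a, P (i a)) -> (forall a, r (i a) = a) -> (forall y, P y -> i (r y) = y) ->
  characteristic G P -> is_aut G phi -> is_aut A (fun a => r (phi (i a))).
Proof.
  intros iM rM Pi ri ir Pchar Haut.
  destruct (Pchar phi Haut) as [Pphi Pphi_onto].
  destruct Haut as [phiM [psi [psiphi phipsi]]].
  split; [intros a b; now rewrite iM, phiM, rM|].
  exists (fun a => r (psi (i a))); split; intros a.
  - now rewrite ir, psiphi by (apply Pphi, Pi).
  - destruct (Pphi_onto (i a) (Pi a)) as [x [Px Ex]].
    now rewrite <- Ex, psiphi, ir, Ex.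
Qed.

Section DirectProduct.
Variables H K : Grp.
Notation G := (prodGrp H K).

Definition inl_prod (h : H) : G := (h, gone).
Definition inr_prod (k : K) : G := (gone, k).

Lemma inl_prod_morph : grp_morph H G inl_prod.
Proof. intros x y; unfold inl_prod; simpl; now rewrite gone_l. Qed.

Lemma inr_prod_morph : grp_morph K G inr_prod.
Proof. intros x y; unfold inr_prod; simpl; now rewrite gone_l. Qed.

Lemma fst_morph : grp_morph G H fst.
Proof. intros x y; reflexivity. Qed.

Lemma snd_morph : grp_morph G K snd.
Proof. intros x y; reflexivity. Qed.

Lemma inl_inr_prod (x : G) : gmul (inl_prod (fst x)) (inr_prod (snd x)) = x.
Proof. destruct x; unfold inl_prod, inr_prod; simpl; now rewrite gmul1, gone_l. Qed.

Lemma same_orbit_prod (x y : G) :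
  same_orbit H (fst x) (fst y) -> same_orbit K (snd x) (snd y) -> same_orbit G x y.
Proof.
  intros [a [[aM [a' [a'a aa']]] Ea]] [b [[bM [b' [b'b bb']]] Eb]].
  exists (fun z : G => (a (fst z), b (snd z)) : G); split.
  - split; [intros u v; simpl; now rewrite aM, bM|].
    exists (fun z : G => (a' (fst z), b' (snd z)) : G).
    split; intros [u v]; simpl; [now rewrite a'a, b'b | now rewrite aa', bb'].
  - destruct y; simpl in *; congruence.
Qed.

Section CharacteristicFactors.
Hypotheses (charH : characteristic G (firstFactor H K))
           (charK : characteristic G (secondFactor H K)).

Lemma char_aut_decomp (phi : G -> G) (x : G) : is_aut G phi ->
  phi x = (fst (phi (inl_prod (fst x))), snd (phi (inr_prod (snd x)))).
Proof.
  intros Haut.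
  assert (Hl : snd (phi (inl_prod (fst x))) = gone) by (apply (charH phi Haut); reflexivity).
  assert (Hr : fst (phi (inr_prod (snd x))) = gone) by (apply (charK phi Haut); reflexivity).
  rewrite <- (inl_inr_prod x) at 1; destruct Haut as [phiM _]; rewrite phiM.
  destruct (phi (inl_prod (fst x))), (phi (inr_prod (snd x))); simpl in *; subst.
  now rewrite gmul1, gone_l.
Qed.

Lemma same_orbit_factors (x y : G) : same_orbit G x y ->
  same_orbit H (fst x) (fst y) /\ same_orbit K (snd x) (snd y).
Proof.
  intros [phi [Haut <-]]; rewrite (char_aut_decomp phi x Haut); split.
  - exists (fun h => fst (phi (inl_prod h))); split; [|reflexivity].
    apply (retract_aut G H (firstFactor H K) inl_prod fst phi);
      auto using inl_prod_morph, fst_morph.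
    + reflexivity.
    + intros [h k] E; unfold firstFactor in E; simpl in E; now subst.
  - exists (fun k => snd (phi (inr_prod k))); split; [|reflexivity].
    apply (retract_aut G K (secondFactor H K) inr_prod snd phi);
      auto using inr_prod_morph, snd_morph.
    + reflexivity.
    + intros [h k] E; unfold secondFactor in E; simpl in E; now subst.
Qed.

End CharacteristicFactors.

Variables (SH : list H) (SK : list K) (SG : list G) (fH fK fG : nat -> nat).
Hypotheses (aH : forall n, aut_growth_at H SH n (fH n))
           (aK : forall n, aut_growth_at K SK n (fK n))
           (aG : forall n, aut_growth_at G SG n (fG n)).

Lemma aut_growth_prod_le : generates H SH -> generates K SK ->
  exists C, forall n m, C * n <= m -> fG n <= fH m * fK m.
Proof.
  intros genH genK.
  destruct (morph_lipschitz G H fst fst_morph SG SH genH) as [C1 HC1].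
  destruct (morph_lipschitz G K snd snd_morph SG SK genK) as [C2 HC2].
  exists (Nat.max C1 C2); intros n m Hm.
  apply (class_count_le _ _ _ _ _ _ (aG n) (class_count_prod _ _ _ _ _ _ (aH m) (aK m))).
  - intros x y [Ox Oy]; split; apply same_orbit_sym; assumption.
  - intros x y z [Ox Oy] [Ox' Oy']; split; eapply same_orbit_trans; eauto.
  - intros x Hx; split; eapply in_ball_mono; eauto; nia.
  - intros x y [Ox Oy]; now apply same_orbit_prod.
Qed.

Lemma aut_growth_prod_ge : generates G SG ->
  characteristic G (firstFactor H K) -> characteristic G (secondFactor H K) ->
  exists D, forall n m, D * n <= m -> fH n * fK n <= fG m.
Proof.
  intros genG charH charK.
  destruct (morph_lipschitz H G inl_prod inl_prod_morph SH SG genG) as [D1 HD1].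
  destruct (morph_lipschitz K G inr_prod inr_prod_morph SK SG genG) as [D2 HD2].
  exists (D1 + D2); intros n m Hm.
  apply (@class_count_le G _ _ _ _ _ _ (class_count_prod _ _ _ _ _ _ (aH n) (aK n)) (aG m)).
  - apply same_orbit_sym.
  - apply same_orbit_trans.
  - intros x [Bh Bk]; rewrite <- (inl_inr_prod x).
    eapply in_ball_mono; [apply in_ballM; eauto | nia].
  - apply same_orbit_factors; assumption.
Qed.

End DirectProduct.

Theorem mainTheorem15 (H K : Grp) (SH : list H) (SK : list K)
  (SG : list (prodGrp H K)) (fH fK fG : nat -> nat) :
  generates H SH -> generates K SK -> generates (prodGrp H K) SG ->
  (forall n, aut_growth_at H SH n (fH n)) ->
  (forall n, aut_growth_at K SK n (fK n)) ->
  (forall n, aut_growth_at (prodGrp H K) SG n (fG n)) ->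
  gpreceq fG (fun n => fH n * fK n) /\
  (characteristic (prodGrp H K) (firstFactor H K) ->
   characteristic (prodGrp H K) (secondFactor H K) ->
   gsim fG (fun n => fH n * fK n)).
Proof.
  intros genH genK genG aH aK aG.
  assert (Hle : gpreceq fG (fun n => fH n * fK n)).
  { apply gpreceq_of_linear_bound, (aut_growth_prod_le H K SH SK SG); assumption. }
  split; [exact Hle|]; intros charH charK; split; [exact Hle|].
  apply gpreceq_of_linear_bound, (aut_growth_prod_ge H K SH SK SG); assumption.
Qed.
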